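(* Fix $\epsilon>0$. For all $u\in\mathbb{R}^k$, $y\in\mathcal{Y}$ and permutations $\pi$ of $[k]$, $\hat\Psi(\pi(u\odot y))=\pi(\hat\Psi(u)\odot y)$, where $(\pi x)_i=x_{\pi_i}$ and $\pi$ and $\odot y$ act on sets elementwise.
   Context: $[k]=\{1,\dots,k\}$, $\mathcal{Y}=\{-1,1\}^k$, $\mathcal{V}=\{-1,0,1\}^k$. $u\odot u'$ entrywise product, $|u|$ entrywise absolute value, $\mathbbm{1}$ all-ones; $\boxed{u}=\mathrm{sign}(u)\odot\min(|u|,\mathbbm{1})$. For $A\subseteq\mathbb{R}^k$, $d_\infty(A,u)=\inf_{a\in A}\|a-u\|_\infty$. For a permutation $\sigma$ and $i\in\{0,\dots,k\}$, $\mathbbm{1}_{\sigma,i}$ is the indicator vector of $\{\sigma_1,\dots,\sigma_i\}$; $V_{\sigma,y}=\{\mathbbm{1}_{\sigma,i}\odot y: i=0,\dots,k\}$; $\mathcal{V}^{\text{face}}=\bigcup_{\sigma,y\in\mathcal{Y}}2^{V_{\sigma,y}}$; $\hat\Psi(u)=\bigcap\{V\in\mathcal{V}^{\text{face}}:d_\infty(\mathrm{conv}\,V,\boxed{u})<\epsilon\}$. *)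

From HB Require Import structures.
From mathcomp Require Import all_boot all_order all_algebra all_fingroup.
From mathcomp Require Import all_classical all_reals all_analysis.
Set Implicit Arguments. Unset Strict Implicit. Unset Printing Implicit Defensive.
Import Order.TTheory GRing.Theory Num.Theory.
Local Open Scope classical_set_scope.
Local Open Scope ring_scope.

Section Defs.
Variables (R : realType) (k : nat).
Notation vec := ('I_k -> R).

Definition hprod (u v : vec) : vec := fun i => u i * v i.

Definition norminf (x : vec) : R := \big[Num.max/0]_(i < k) `|x i|.

(* d_inf(A,u) = inf_{a in A} ||a - u||_inf, in the extended reals (inf of empty set = +oo) *)
Definition dinf (A : set vec) (u : vec) : \bar R :=
  ereal_inf [set (norminf (fun i => a i - u i))%:E | a in A].

Definition conv (A : set vec) : set vec :=
  [set x | exists (n : nat) (w : 'I_n -> R) (a : 'I_n -> vec),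
     (forall t, 0 <= w t) /\ \sum_(t < n) w t = 1 /\ (forall t, A (a t)) /\
     (forall j, x j = \sum_(t < n) w t * a t j)].

Definition clip (u : vec) : vec := fun i => Num.sg (u i) * Num.min `|u i| 1.

Definition Ycal : set vec := [set y | forall i, y i = 1 \/ y i = -1].
Definition Vcal : set vec := [set v | forall i, v i = 1 \/ v i = 0 \/ v i = -1].

(* indicator of {σ_1,...,σ_i} (σ acting on 'I_k, 0-indexed: {σ 0,...,σ (i-1)}) *)
Definition ind (s : 'S_k) (i : nat) : vec :=
  fun j => if [exists t : 'I_k, (t < i)%N && (s t == j)] then 1 else 0.

Definition Vsy (s : 'S_k) (y : vec) : set vec :=
  [set v | exists i : nat, (i <= k)%N /\ v = hprod (ind s i) y].

Definition Vface : set (set vec) :=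
  [set V | exists (s : 'S_k) (y : vec), Ycal y /\ V `<=` Vsy s y].

Definition Psihat (eps : R) (u : vec) : set vec :=
  Vcal `&` \bigcap_(V in [set V | Vface V /\ (dinf (conv V) (clip u) < eps%:E)%E]) V.

Definition permv (p : 'S_k) (x : vec) : vec := fun i => x (p i).
End Defs.

(* The hyperoctahedral group of signed coordinate permutations acts on R^k by
   isometries of the sup norm that commute with clipping, preserve the cube
   vertices and faces, and map convex combinations to convex combinations.
   Every ingredient in the definition of Psihat is therefore equivariant, and
   so is Psihat; coordinate permutations and sign flips are treated separately
   and composed. *)
From Pilot Require Import Defs.
From HB Require Import structures.
From mathcomp Require Import all_boot all_order all_algebra all_fingroup.
From mathcomp Require Import all_classical all_reals all_analysis.
Set Implicit Arguments. Unset Strict Implicit. Unset Printing Implicit Defensive.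
Import Order.TTheory GRing.Theory Num.Theory.
Local Open Scope classical_set_scope.
Local Open Scope ring_scope.

Section PsihatSymmetries.
Variables (R : realType) (k : nat).
Notation vec := ('I_k -> R).

Lemma norminf_ge0 (x : vec) : 0 <= norminf x.
Proof. exact: bigmax_ge_id. Qed.

Lemma norminf_ge (x : vec) i : `|x i| <= norminf x.
Proof. exact: (le_bigmax 0 (fun i => `|x i|)). Qed.

Lemma norminf_le (x : vec) M : 0 <= M -> (forall i, `|x i| <= M) -> norminf x <= M.
Proof. by move=> M0 xM; apply: bigmax_le => // i _; apply: xM. Qed.

Lemma dinf_subset (A B : set vec) x : A `<=` B -> (dinf B x <= dinf A x)%E.
Proof. by move=> AB; apply/ereal_inf_le_tmp/image_subset. Qed.

Lemma dinf_isometry (f : vec -> vec) (A : set vec) x :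
  (forall a b, norminf (fun i => f a i - f b i) = norminf (fun i => a i - b i)) ->
  dinf (f @` A) (f x) = dinf A x.
Proof.
move=> f_iso; rewrite /dinf image_comp; congr ereal_inf.
by apply: eq_imagel => a _ /=; rewrite f_iso.
Qed.

Lemma conv_image_sub (f : vec -> vec) (W : set vec) :
  (forall n (w : 'I_n -> R) (a : 'I_n -> vec),
     f (fun j => \sum_(t < n) w t * a t j) = fun j => \sum_(t < n) w t * f (a t) j) ->
  f @` Defs.conv W `<=` Defs.conv (f @` W).
Proof.
move=> f_comb _ [x [n [w [a [w_ge0 [w_sum1 [Wa xE]]]]]] <-].
have -> : x = (fun j => \sum_(t < n) w t * a t j) by apply/funext.
exists n, w, (f \o a); do 2!split => //; split; first by move=> t; exists (a t).
by rewrite f_comb.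
Qed.

Record face_isometry (f : vec -> vec) : Prop := FaceIsometry {
  face_isometry_dist : forall a b,
    norminf (fun i => f a i - f b i) = norminf (fun i => a i - b i);
  face_isometry_clip : forall u, clip (f u) = f (clip u);
  face_isometry_Vcal : forall v, Vcal v -> Vcal (f v);
  face_isometry_Vface : forall W, Vface W -> Vface (f @` W);
  face_isometry_conv : forall W, f @` Defs.conv W `<=` Defs.conv (f @` W) }.

Section PsihatImage.
Variables (eps : R) (f g : vec -> vec).
Hypotheses (fK : cancel f g) (gK : cancel g f).
Hypotheses (f_iso : face_isometry f) (g_iso : face_isometry g).

Lemma Psihat_image_sub u : f @` Psihat eps u `<=` Psihat eps (f u).
Proof.
move=> _ [v [Vv Iv] <-]; split; first exact: face_isometry_Vcal.
move=> W [faceW dW]; suff [w Ww <-] : (g @` W) v by rewrite gK.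
apply: Iv; split; first exact: face_isometry_Vface.
have clip_u : clip u = g (clip (f u)) by rewrite (face_isometry_clip f_iso) fK.
rewrite clip_u; apply: le_lt_trans dW.
apply: le_trans (dinf_subset _ (face_isometry_conv g_iso (W := W))) _.
by rewrite dinf_isometry //; apply: face_isometry_dist.
Qed.

End PsihatImage.

Lemma Psihat_image eps (f g : vec -> vec) u :
  cancel f g -> cancel g f -> face_isometry f -> face_isometry g ->
  Psihat eps (f u) = f @` Psihat eps u.
Proof.
move=> fK gK f_iso g_iso; apply/seteqP; split; last exact: Psihat_image_sub.
move=> w Pw; exists (g w); last exact: gK.
by rewrite -[u]fK; apply: (Psihat_image_sub gK fK g_iso f_iso); exists w.
Qed.

Lemma permvK (p : 'S_k) : cancel (@permv R k p) (permv p^-1).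
Proof. by move=> x; apply/funext => i; rewrite /permv permKV. Qed.

Lemma permvKV (p : 'S_k) : cancel (@permv R k p^-1) (permv p).
Proof. by move=> x; apply/funext => i; rewrite /permv permK. Qed.

Lemma norminf_permv (p : 'S_k) (x : vec) : norminf (permv p x) = norminf x.
Proof.
have le_permv q (z : vec) : norminf (permv q z) <= norminf z.
  by apply: norminf_le (norminf_ge0 z) _ => i; apply: (norminf_ge z (q i)).
apply/le_anti/andP; split; first exact: le_permv.
by rewrite -{1}[x](permvK p); apply: le_permv.
Qed.

Lemma permv_ind (p s : 'S_k) i : permv p (ind R s i) = ind R (s * p^-1)%g i.
Proof.
apply/funext => j; rewrite /permv /ind; congr (if _ then _ else _).
by apply: eq_existsb => t; rewrite permM (can2_eq (permKV p) (permK p)).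
Qed.

Lemma permv_Vsy (p s : 'S_k) (y : vec) :
  permv p @` Vsy s y `<=` Vsy (s * p^-1)%g (permv p y).
Proof. by move=> _ [_ [i [ilek ->]] <-]; exists i; rewrite -permv_ind. Qed.

Lemma face_isometry_permv (p : 'S_k) : face_isometry (permv p).
Proof.
split=> //.
- by move=> a b; apply: norminf_permv.
- by move=> v Vv i; apply: Vv.
- move=> W [s [y [Yy WV]]]; exists (s * p^-1)%g, (permv p y).
  split; first by move=> i; apply: Yy.
  by move=> _ [w /WV Vw <-]; apply: permv_Vsy; exists w.
- by move=> W; apply: conv_image_sub.
Qed.

Section SignFlip.
Variables (c : vec) (Yc : Ycal c).

Lemma Ycal_norm j : `|c j| = 1.
Proof. by case: (Yc j) => ->; rewrite ?normrN normr1. Qed.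

Lemma Ycal_sg j : Num.sg (c j) = c j.
Proof. by case: (Yc j) => ->; rewrite ?sgrN sgr1. Qed.

Lemma Ycal_mul_self j : c j * c j = 1.
Proof. by case: (Yc j) => ->; rewrite ?mulrNN mulr1. Qed.

Lemma hprodK : cancel (fun v => hprod v c) (fun v => hprod v c).
Proof. by move=> x; apply/funext => j; rewrite /hprod -mulrA Ycal_mul_self mulr1. Qed.

Lemma norminf_hprod (x : vec) : norminf (hprod x c) = norminf x.
Proof. by apply: eq_bigr => i _; rewrite normrM Ycal_norm mulr1. Qed.

Lemma Ycal_hprod (y : vec) : Ycal y -> Ycal (hprod y c).
Proof.
move=> Yy j; rewrite /hprod.
by case: (Yc j) => ->; rewrite ?mulr1 ?mulrN1; case: (Yy j) => ->;
  rewrite ?opprK; tauto.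
Qed.

Lemma Vcal_hprod (v : vec) : Vcal v -> Vcal (hprod v c).
Proof.
move=> Vv j; rewrite /hprod.
case: (Yc j) => ->; rewrite ?mulr1 ?mulrN1.
  by case: (Vv j) => [->|[->|->]]; tauto.
by case: (Vv j) => [->|[->|->]]; rewrite ?oppr0 ?opprK; tauto.
Qed.

Lemma hprod_Vsy (s : 'S_k) (y : vec) :
  (fun v => hprod v c) @` Vsy s y `<=` Vsy s (hprod y c).
Proof.
move=> _ [_ [i [ilek ->]] <-]; exists i; split=> //.
by apply/funext => j; rewrite /hprod mulrA.
Qed.

Lemma face_isometry_hprod : face_isometry (fun v => hprod v c).
Proof.
split.
- move=> a b; rewrite -[RHS](norminf_hprod); congr norminf.
  by apply/funext => i; rewrite /hprod mulrBl.
- move=> u; apply/funext => j.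
  by rewrite /clip /hprod normrM Ycal_norm mulr1 sgrM Ycal_sg mulrAC.
- exact: Vcal_hprod.
- move=> W [s [y [Yy WV]]]; exists s, (hprod y c); split; first exact: Ycal_hprod.
  by move=> _ [w /WV Vw <-]; apply: hprod_Vsy; exists w.
- move=> W; apply: conv_image_sub => n w a; apply/funext => j.
  by rewrite /hprod mulr_suml; apply: eq_bigr => t _; rewrite mulrA.
Qed.

End SignFlip.

Lemma Psihat_permv eps (p : 'S_k) (u : vec) :
  Psihat eps (permv p u) = permv p @` Psihat eps u.
Proof.
exact: Psihat_image (permvK p) (permvKV p)
  (face_isometry_permv p) (face_isometry_permv p^-1).
Qed.

Lemma Psihat_hprod eps (c u : vec) :
  Ycal c -> Psihat eps (hprod u c) = (fun v => hprod v c) @` Psihat eps u.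
Proof.
move=> Yc; exact: Psihat_image (hprodK Yc) (hprodK Yc)
  (face_isometry_hprod Yc) (face_isometry_hprod Yc).
Qed.

End PsihatSymmetries.

Theorem lemma12 (R : realType) (k : nat) (eps : R) (heps : 0 < eps)
  (u : 'I_k -> R) (y : 'I_k -> R) (hy : Ycal y) (p : 'S_k) :
  Psihat eps (permv p (hprod u y)) =
  (permv p) @` ((fun v => hprod v y) @` Psihat eps u).
Proof. by rewrite Psihat_permv Psihat_hprod. Qed.
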